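(* For every integer $d\ge1$, $\lim_{n\to\infty}\bar\delta_{n,d}=\frac{d^d}{(d+1)^{d+1}}$.
   Context: For integers $\lambda\ge0$, $d\ge1$, write $\lambda=\sum_{i=1}^d\binom{k_i}{i}$ uniquely with $k_d>\cdots>k_1\ge0$ and set $\lambda^{[d]}=\sum_{i=1}^d\binom{k_i}{i+1}$. For $n>d$ and $0\le\lambda\le\binom nd$ let $\delta_{n,d}(\lambda)=\lambda/\binom nd-\lambda^{[d]}/\binom n{d+1}$, and $\bar\delta_{n,d}=\max_{0\le\lambda\le\binom nd}\delta_{n,d}(\lambda)$ (denoted $\delta_{n,d}$ in the paper's section on limits). *)

From HB Require Import structures.
From Stdlib Require Import ClassicalEpsilon.
From mathcomp Require Import all_boot all_order all_algebra.
From mathcomp Require Import all_classical all_reals all_analysis.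
Set Implicit Arguments. Unset Strict Implicit. Unset Printing Implicit Defensive.
Import Order.TTheory GRing.Theory Num.Theory.
Local Open Scope ring_scope.

Definition is_cascade (d lam : nat) (k : nat -> nat) : Prop :=
  (forall i, (1 <= i)%N -> (i < d)%N -> (k i < k i.+1)%N) /\
  lam = (\sum_(1 <= i < d.+1) 'C(k i, i))%N.

(* The (unique) representation, chosen classically. *)
Definition cascade (d lam : nat) : nat -> nat :=
  epsilon (inhabits (fun _ : nat => 0%N)) (fun k => is_cascade d lam k).

Definition lam_up (d lam : nat) : nat :=
  (\sum_(1 <= i < d.+1) 'C(cascade d lam i, i.+1))%N.

Definition delta (R : realType) (n d lam : nat) : R :=
  lam%:R / ('C(n, d))%:R - (lam_up d lam)%:R / ('C(n, d.+1))%:R.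

(* max over 0 <= lam <= C(n,d) (the term lam = 0 gives 0, so the
   initial value 0 of the fold does not change the maximum). *)
Definition delta_bar (R : realType) (n d : nat) : R :=
  \big[Num.max/0]_(0 <= lam < ('C(n, d)).+1) delta R n d lam.

From HB Require Import structures.
From Stdlib Require Import ClassicalEpsilon.
From mathcomp Require Import all_boot all_order all_algebra.
From mathcomp Require Import all_classical all_reals all_analysis.
From mathcomp Require Import zify ring lra.
Import numFieldNormedType.Exports.
Import Order.TTheory GRing.Theory Num.Theory.

(* Let [m] be the top index of the cascade of [lam]. Since
   [lam < C(m, d) + C(m, d - 1)] and [lam^[d] >= C(m, d + 1)], the numerator
   of [delta] is at most [C(m, d) (n - m) + d C(n, d)]; with
   [C(m, d) / C(n, d) <= (m / n)^d] and AM-GM for [d] copies of [m / d] and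
   one copy of [n - m], this gives [delta <= d^d / (d + 1)^(d + 1) + O(1 / n)].
   Conversely [lam = C(m, d)] with [m = floor(d n / (d + 1))] has
   [lam^[d] = C(m, d + 1)], so [delta = C(m, d) (n - m) / (C(n, d) (n - d))],
   which is at least [(d / (d + 1) - O(1 / n))^d / (d + 1)]. *)

Lemma leq_addn_bin a j : (a <= 'C(a + j, j.+1))%N.
Proof.
elim: j => [|j IH]; first by rewrite addn0 bin1.
by rewrite addnS binS (leq_trans IH) // leq_addl.
Qed.

Lemma ltn_bin2l d a b : (d <= a)%N -> (a < b)%N -> ('C(a, d.+1) < 'C(b, d.+1))%N.
Proof.
move=> hda hab; apply: (@leq_trans 'C(a.+1, d.+1)); last exact: leq_bin2l.
by rewrite binS -addn1 leq_add2l bin_gt0.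
Qed.

Lemma is_cascade_ltn d lam k : is_cascade d lam k -> (lam < 'C(k d + 1, d))%N.
Proof.
elim: d lam => [|d IH] lam [hk ->]; first by rewrite big_geq // bin0.
rewrite big_nat_recr //= addn1 binS addnC ltn_add2l.
have {}IH := IH _ (conj (fun i h1 h2 => hk i h1 (ltnW h2)) erefl).
case: d {IH} hk IH => [|d] hk IH; first by rewrite big_geq // !bin0.
by apply: (leq_trans IH); rewrite leq_bin2l // addn1 hk.
Qed.

(* Greedy construction: take the largest [m] with [C(m, d+2) <= lam] as the top
   index and recurse on the remainder, which is then smaller than [C(m, d+1)]. *)
Lemma is_cascade_exists d lam : exists k, is_cascade d.+1 lam k.
Proof.
elim: d lam => [|d IH] lam.
  exists (fun _ => lam); split => [i h1 h2|]; first by lia.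
  by rewrite big_nat1 bin1.
have exP : exists w, (lam < 'C(w, d.+2))%N.
  by exists (lam.+1 + d.+1); apply: leq_addn_bin.
case: (ex_minnP exP) => w hw wmin.
have w_gt0 : (0 < w)%N by case: w hw {wmin} => //; rewrite bin0n.
set m := w.-1.
have hm : ('C(m, d.+2) <= lam)%N.
  by rewrite leqNgt; apply/negP => /wmin; lia.
have hrest : (lam - 'C(m, d.+2) < 'C(m, d.+1))%N.
  by move: hw; rewrite -(prednK w_gt0) binS -/m; lia.
have [k' [hk' hs]] := IH (lam - 'C(m, d.+2))%N.
exists (fun i => if i == d.+2 then m else k' i); split.
  move=> i h1 h2; case: (ltngtP i d.+1) => hi.
  - by rewrite !ifN; [apply: hk'|lia|lia].
  - lia.
  - subst i; rewrite eqxx ifN; last by lia.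
    rewrite ltnNge; apply/negP => /(leq_bin2l d.+1).
    suff : ('C(k' d.+1, d.+1) <= lam - 'C(m, d.+2))%N by lia.
    by rewrite hs big_nat_recr //= leq_addl.
rewrite big_nat_recr //= eqxx.
rewrite (eq_big_nat _ _ (F2 := fun i => 'C(k' i, i))); last first.
  by move=> i hi; rewrite ifN //; lia.
by rewrite -hs; lia.
Qed.

Lemma is_cascade_cascade d lam : (0 < d)%N -> is_cascade d lam (cascade d lam).
Proof.
by case: d => // d _; apply: epsilon_spec; apply: is_cascade_exists.
Qed.

Lemma cascade_top_bounds d lam : (0 < d)%N ->
  ('C(cascade d lam d, d) <= lam < 'C(cascade d lam d, d) + 'C(cascade d lam d, d.-1))%N.
Proof.
case: d => // d _; have hk := is_cascade_cascade d.+1 lam isT.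
have [_ hs] := hk; have := is_cascade_ltn _ _ _ hk.
rewrite addn1 binS /= => hlt; apply/andP; split=> //.
by rewrite [X in _ <= X]hs big_nat_recr //= leq_addl.
Qed.

Lemma lam_up_ge d lam : (0 < d)%N -> ('C(cascade d lam d, d.+1) <= lam_up d lam)%N.
Proof. by case: d => // d _; rewrite /lam_up big_nat_recr //= leq_addl. Qed.

Lemma sum_bin_up_eq0 (k : nat -> nat) (r : seq nat) :
  (\sum_(i <- r) 'C(k i, i) = 0)%N -> (\sum_(i <- r) 'C(k i, i.+1) = 0)%N.
Proof.
elim: r => [|x r IH]; first by rewrite !big_nil.
rewrite !big_cons => /eqP; rewrite addn_eq0 => /andP[/eqP hx /eqP hr].
rewrite IH // addn0 bin_small //.
by move: hx => /eqP; rewrite -leqn0 leqNgt bin_gt0 -ltnNge => /ltnW.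
Qed.

(* The cascade of [C(m, d)] is [m] on top and vanishing terms below. *)
Lemma lam_up_bin d m : (0 < d)%N -> (d <= m)%N -> lam_up d 'C(m, d) = 'C(m, d.+1).
Proof.
case: d => // d _ hdm; rewrite /lam_up.
have [_ hs] := is_cascade_cascade d.+1 'C(m, d.+1) isT.
have := cascade_top_bounds d.+1 'C(m, d.+1) isT.
move: (cascade d.+1 'C(m, d.+1)) hs => k hs /= /andP[hlo hhi].
have hkm : k d.+1 = m.
  apply/eqP; rewrite eqn_leq; apply/andP; split; rewrite leqNgt; apply/negP => h.
    by have := ltn_bin2l _ _ _ (ltnW hdm) h; lia.
  by have := leq_bin2l d.+1 (h : (k d.+1).+1 <= m)%N; rewrite binS; lia.
rewrite big_nat_recr //= hkm in hs.
by rewrite big_nat_recr //= hkm sum_bin_up_eq0 //; lia.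
Qed.

Lemma leq_binM_expn d m n : (m <= n)%N -> ('C(m, d) * n ^ d <= 'C(n, d) * m ^ d)%N.
Proof.
move=> hmn; elim: d => [|d IH]; first by rewrite !bin0.
rewrite -(@leq_pmul2l d.+1) // !mulnA !mul_bin_left !expnS.
have h : ((m - d) * n <= (n - d) * m)%N by nia.
have := leq_mul h IH.
by rewrite -!mulnA (mulnCA n) (mulnCA m) !mulnA.
Qed.

Lemma leq_subn_expnM_bin d e m n : (d <= e)%N ->
  ('C(n, d) * (m - e) ^ d <= 'C(m, d) * n ^ d)%N.
Proof.
elim: d => [|d IH] hde; first by rewrite !bin0.
rewrite -(@leq_pmul2l d.+1) // !mulnA !mul_bin_left !expnS.
have h : ((n - d) * (m - e) <= (m - d) * n)%N.
  by rewrite mulnC leq_mul // ?leq_subr //; lia.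
have := leq_mul h (IH (ltnW hde)).
by rewrite -!mulnA (mulnCA (m - e)) (mulnCA n) !mulnA.
Qed.

Lemma cascade_top_leq d n lam : (0 < d)%N -> (d <= n)%N -> (lam <= 'C(n, d))%N ->
  (cascade d lam d <= n)%N.
Proof.
case: d => // d _ hdn hlam; rewrite leqNgt; apply/negP => /(ltn_bin2l _ _ _ (ltnW hdn)).
by have /andP[+ _] := cascade_top_bounds d.+1 lam isT; lia.
Qed.

Lemma cascade_numerator_le d n lam (m := cascade d lam d) : (0 < d)%N -> (m <= n)%N ->
  (lam * (n - d) <= d.+1 * lam_up d lam + 'C(m, d) * (n - m) + d * 'C(n, d))%N.
Proof.
rewrite {}/m; case: d => // d _; set m := cascade _ _ _ => hmn.
have /andP[_ hhi] := cascade_top_bounds d.+1 lam isT; rewrite -/m /= in hhi.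
have hup := lam_up_ge d.+1 lam isT; rewrite -/m in hup.
have htop : ('C(m, d.+1) * (n - d.+1) <= d.+2 * lam_up d.+1 lam + 'C(m, d.+1) * (n - m))%N.
  apply: (@leq_trans ('C(m, d.+1) * (m - d.+1) + 'C(m, d.+1) * (n - m))).
    by rewrite -mulnDr leq_mul2l; apply/orP; right; lia.
  by rewrite leq_add2r mulnC -mul_bin_left leq_mul2l hup orbT.
have hrest : ('C(m, d) * (n - d.+1) <= d.+1 * 'C(n, d.+1))%N.
  by rewrite mul_bin_left mulnC leq_mul ?leq_bin2l //; lia.
apply: (leq_trans (leq_mul (ltnW hhi) (leqnn _))).
by rewrite mulnDl leq_add.
Qed.

Local Open Scope classical_set_scope.
Local Open Scope ring_scope.

(* The maximum of [t^d (1 - t)] on [[0, 1]], attained at [t = d / (d + 1)]. *)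
Definition peak (R : numFieldType) (d : nat) : R := d%:R ^+ d / d.+1%:R ^+ d.+1.

Lemma expr_mul_le_peak (R : realFieldType) d (x y : R) : (0 < d)%N -> 0 <= x -> 0 <= y ->
  x ^+ d * y <= peak R d * (x + y) ^+ d.+1.
Proof.
move=> d_gt0 x0 y0.
pose E (i : 'I_d.+1) := if i == ord_max then y else x / d%:R.
have E0 : {in predT, forall i, 0 <= E i}.
  by move=> i _; rewrite /E; case: ifP => // _; rewrite divr_ge0.
have d0 : d%:R != 0 :> R by rewrite pnatr_eq0 -lt0n.
have d1 : d.+1%:R != 0 :> R by rewrite pnatr_eq0.
have Ew (i : 'I_d) : E (widen_ord (leqnSn d) i) = x / d%:R.
  by rewrite /E ifN //; apply/eqP => /(congr1 val) /=; have := ltn_ord i; lia.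
have := Order.le_of_leif (leif_AGM E0).
rewrite card_ord !big_ord_recr /= (eq_bigr _ (fun i _ => Ew i)).
rewrite (eq_bigr _ (fun i _ => Ew i)) prodr_const sumr_const card_ord /E eqxx.
rewrite -[x / d%:R *+ d]mulr_natr divfK // => hagm.
have -> : x ^+ d * y = d%:R ^+ d * ((x / d%:R) ^+ d * y).
  by rewrite expr_div_n; field; rewrite expf_neq0.
have -> : peak R d * (x + y) ^+ d.+1 = d%:R ^+ d * ((x + y) / d.+1%:R) ^+ d.+1.
  by rewrite /peak expr_div_n; field; rewrite expf_neq0.
by rewrite ler_wpM2l // exprn_ge0 // ler0n.
Qed.

Lemma delta_eq (R : realType) n d lam : (d < n)%N ->
  delta R n d lam = (lam%:R * (n - d)%:R - d.+1%:R * (lam_up d lam)%:R)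
                    / ('C(n, d)%:R * (n - d)%:R).
Proof.
move=> hdn; rewrite /delta.
have d1 : d.+1%:R != 0 :> R by rewrite pnatr_eq0.
have hC : 'C(n, d.+1)%:R = 'C(n, d)%:R * (n - d)%:R / d.+1%:R :> R.
  by apply: (mulfI d1); rewrite -[LHS]natrM mul_bin_left natrM; field.
have C0 : 'C(n, d)%:R != 0 :> R by rewrite pnatr_eq0 -lt0n bin_gt0 ltnW.
have nd0 : (n - d)%:R != 0 :> R by rewrite pnatr_eq0 subn_eq0 -ltnNge.
by rewrite hC; field; rewrite nd0 C0 nat1r d1.
Qed.

Lemma ler_binM_subn_peak (R : realFieldType) d m n : (0 < d)%N -> (m <= n)%N ->
  ('C(m, d) * (n - m))%:R <= 'C(n, d)%:R * (peak R d * n%:R) :> R.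
Proof.
move=> d_gt0 hmn; have [n0|n_gt0] := posnP n.
  by move: hmn; rewrite n0 leqn0 => /eqP->; rewrite subnn muln0 !mulr0.
have nd_gt0 : 0 < n%:R ^+ d :> R by rewrite exprn_gt0 // ltr0n.
rewrite -(ler_pM2r nd_gt0) natrM mulrAC.
have hbin : 'C(m, d)%:R * n%:R ^+ d <= 'C(n, d)%:R * m%:R ^+ d :> R.
  by rewrite -!natrX -!natrM ler_nat leq_binM_expn.
apply: (le_trans (ler_wpM2r (ler0n _ _) hbin)); rewrite -mulrA.
have := expr_mul_le_peak R d m%:R (n - m)%:R d_gt0 (ler0n R m) (ler0n R (n - m)).
rewrite -natrD subnKC // => hagm.
rewrite (le_trans (ler_wpM2l (ler0n _ _) hagm)) // exprSr.
by rewrite le_eqVlt; apply/orP; left; apply/eqP; ring.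
Qed.

Lemma delta_le (R : realType) n d lam : (0 < d)%N -> (d < n)%N -> (lam <= 'C(n, d))%N ->
  delta R n d lam <= peak R d + (peak R d * d%:R + d%:R) / (n - d)%:R.
Proof.
move=> d_gt0 hdn hlam.
have hmn := cascade_top_leq d n lam d_gt0 (ltnW hdn) hlam.
have hnum := cascade_numerator_le d n lam d_gt0 hmn.
have hpeak := ler_binM_subn_peak R d _ _ d_gt0 hmn.
have nd_gt0 : 0 < (n - d)%:R :> R by rewrite ltr0n subn_gt0.
have C_gt0 : 0 < 'C(n, d)%:R :> R by rewrite ltr0n bin_gt0 ltnW.
rewrite delta_eq // ler_pdivrMr ?mulr_gt0 //.
have -> : (peak R d + (peak R d * d%:R + d%:R) / (n - d)%:R) * ('C(n, d)%:R * (n - d)%:R)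
    = 'C(n, d)%:R * (peak R d * n%:R) + d%:R * 'C(n, d)%:R.
  by rewrite natrB 1?ltnW //; field; rewrite -natrB 1?ltnW // gt_eqF.
move: hnum; rewrite -(ler_nat R) !natrD !natrM; lra.
Qed.

Lemma delta_bin_ge (R : realType) n d : (0 < d)%N -> (d.+1 ^ 2 <= n)%N ->
  (d%:R / d.+1%:R - d.+1%:R / n%:R) ^+ d / d.+1%:R
    <= delta R n d 'C(d * n %/ d.+1, d) :> R.
Proof.
move=> d_gt0 hn; set m := (d * n %/ d.+1)%N.
have hm_lo : (m * d.+1 <= d * n)%N by apply: leq_divM.
have hm_hi : (d * n < m.+1 * d.+1)%N by apply: ltn_ceil.
have hdm : (d < m)%N by nia.
have hmn : (m <= n)%N by nia.
have [hdm' hdn] : (d <= m)%N /\ (d <= n)%N by lia.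
have n_gt0 : 0 < n%:R :> R by rewrite ltr0n; lia.
have nd_gt0 : 0 < (n - d)%:R :> R by rewrite ltr0n; lia.
have C_gt0 : 0 < 'C(n, d)%:R :> R by rewrite ltr0n bin_gt0; lia.
have d1_gt0 : 0 < d.+1%:R :> R by rewrite ltr0n.
have -> : delta R n d 'C(m, d) = 'C(m, d)%:R / 'C(n, d)%:R * ((n - m)%:R / (n - d)%:R).
  rewrite delta_eq; last by lia.
  rewrite lam_up_bin // -[_.+1%:R * _]natrM mul_bin_left natrM !natrB //.
  by field; rewrite -!natrB // !gt_eqF.
set y := _ - _.
have y_ge0 : 0 <= y.
  have -> : y = (d * n - d.+1 ^ 2)%:R / (d.+1%:R * n%:R).
    by rewrite /y natrB ?natrM ?natrX; [field; rewrite !gt_eqF|nia].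
  by rewrite divr_ge0 ?ler0n.
have y_le : y <= (m - d)%:R / n%:R.
  rewrite -subr_ge0.
  have -> : (m - d)%:R / n%:R - y
      = ((m - d) * d.+1 + d.+1 ^ 2 - d * n)%:R / (d.+1%:R * n%:R).
    have hbig : (d * n <= (m - d) * d.+1 + d.+1 ^ 2)%N by nia.
    rewrite /y (natrB _ hbig) natrD !natrM ?natrX (natrB _ hdm').
    by field; rewrite !gt_eqF.
  by rewrite divr_ge0 ?ler0n.
apply: ler_pM; rewrite ?exprn_ge0 ?invr_ge0 ?ler0n //.
  apply: (le_trans (lerXn2r d _ _ y_le)); rewrite ?nnegrE ?divr_ge0 ?ler0n //.
  rewrite expr_div_n ler_pdivrMr ?exprn_gt0 // mulrAC ler_pdivlMr //.
  by rewrite -!natrX -!natrM ler_nat mulnC leq_subn_expnM_bin.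
rewrite ler_pdivlMr // mulrC ler_pdivrMr // -natrM ler_nat; nia.
Qed.

Lemma cvg_div_natr (R : realType) (c : R) : (c / n%:R) @[n --> \oo] --> 0.
Proof.
rewrite -cvg_shiftS.
have h : (c * harmonic n) @[n --> \oo] --> c * 0 by apply: cvgMl_tmp; exact: cvg_harmonic.
by rewrite mulr0 in h.
Qed.

Lemma cvg_div_natr_subn (R : realType) k (c : R) : (c / (n - k)%:R) @[n --> \oo] --> 0.
Proof.
rewrite -(cvg_shiftn k) /=.
under eq_fun => n do rewrite addnK.
exact: cvg_div_natr.
Qed.

Lemma peakE (R : numFieldType) d : peak R d = (d%:R / d.+1%:R) ^+ d / d.+1%:R.
Proof.
by rewrite /peak expr_div_n exprSr invfM mulrA.
Qed.

Lemma delta_bar_le (R : realType) n d : (0 < d)%N -> (d < n)%N ->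
  delta_bar R n d <= peak R d + (peak R d * d%:R + d%:R) / (n - d)%:R.
Proof.
move=> d_gt0 hdn; rewrite /delta_bar big_seq; apply: bigmax_le.
  by rewrite addr_ge0 ?divr_ge0 ?addr_ge0 ?mulr_ge0 ?ler0n ?exprn_ge0.
by move=> lam; rewrite mem_index_iota ltnS => hlam; apply: delta_le.
Qed.

Lemma delta_bar_ge (R : realType) n d : (0 < d)%N -> (d.+1 ^ 2 <= n)%N ->
  (d%:R / d.+1%:R - d.+1%:R / n%:R) ^+ d / d.+1%:R <= delta_bar R n d.
Proof.
move=> d_gt0 hn; apply: (le_trans (delta_bin_ge R n d d_gt0 hn)).
apply: le_bigmax_seq => //; rewrite mem_index_iota ltnS leq_bin2l //.
by rewrite -ltnS ltn_divLR //; nia.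
Qed.

Theorem proposition6p3 (R : realType) (d : nat) (hd : (1 <= d)%N) :
  (fun n : nat => delta_bar R n d) @ \oo -->
    ((d%:R : R) ^+ d / (d.+1)%:R ^+ d.+1).
Proof.
apply: (squeeze_cvgr
  (f := fun n => (d%:R / d.+1%:R - d.+1%:R / n%:R) ^+ d / d.+1%:R)
  (h := fun n => peak R d + (peak R d * d%:R + d%:R) / (n - d)%:R)).
- exists (d.+1 ^ 2)%N => // n /= hn.
  have hdn : (d < n)%N by apply: leq_trans hn; rewrite leq_pmulr.
  by rewrite delta_bar_ge ?delta_bar_le.
- rewrite -/(peak R d) peakE; apply: cvgMr_tmp.
  apply: (continuous_cvg _ (@exprn_continuous R d _)).
  rewrite -[X in _ --> X]subr0; apply: cvgB; [exact: cvg_cst|exact: cvg_div_natr].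
- rewrite -[X in _ --> X]addr0; apply: cvgD; [exact: cvg_cst|exact: cvg_div_natr_subn].
Qed.
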